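(* Let $\mathcal{C}$ be an $[n,k]_q$ code such that for every $c\in\mathcal{C}\setminus\{0\}$ the entries of $V(c)$ are pairwise distinct. Then there exists a non-zero $r=(r_1,\dots,r_{q-1})\in\mathbb{N}^{q-1}$ such that for every $c\in\mathcal{C}\setminus\{0\}$: $$\sum_{j=1}^{q-1} r_j\left(c[\alpha^{i-j}]-c[\alpha^{\ell-j}]\right)\neq 0\ \text{ for all } 1\le i<\ell\le q-1,\quad\text{and}\quad \sum_{j=1}^{q-1} r_j\left(c[\alpha^{\ell-j}]-c[0]\right)\neq 0\ \text{ for all } 1\le \ell\le q-1.$$
   Context: $\alpha$ is a fixed primitive element of $\mathbb{F}_q$ (exponents modulo $q-1$), $\mathbb{N}=\{0,1,2,\dots\}$. An $[n,k]_q$ code is a $k$-dimensional subspace of $\mathbb{F}_q^n$. For $c\in\mathbb{F}_q^n$, $\beta\in\mathbb{F}_q$, $c[\beta]=|\{l:c_l=\beta\}|$ and $V(c)=(c[\alpha],\dots,c[\alpha^{q-1}],c[0])$. *)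

From HB Require Import structures.
From mathcomp Require Import all_boot all_order all_algebra all_field.
Set Implicit Arguments. Unset Strict Implicit. Unset Printing Implicit Defensive.
Import GRing.Theory.
Local Open Scope ring_scope.

Definition wcount (F : finFieldType) (n : nat) (c : 'rV[F]_n) (b : F) : nat :=
  #|[set l : 'I_n | c ord0 l == b]|.

Definition Vvec (F : finFieldType) (alpha : F) (n : nat) (c : 'rV[F]_n) : seq nat :=
  [seq wcount c (alpha ^+ i) | i <- iota 1 #|F|.-1] ++ [:: wcount c 0].

From HB Require Import structures.
From mathcomp Require Import all_boot all_order all_algebra all_field.
Import GRing.Theory.
Local Open Scope ring_scope.

(* The weight vector r = e_(q-1) suffices: since alpha^(x - (q-1)) = alpha^x,
   the two families of sums collapse to c[alpha^i] - c[alpha^l] and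
   c[alpha^l] - c[0], which are differences of distinct entries of V(c). *)

Lemma exprz_subn_order (R : unitRingType) (x : R) (N z : nat) :
  (0 < N)%N -> x ^+ N = 1 -> x ^ (z%:Z - N%:Z) = x ^+ z.
Proof.
move=> N_gt0 xN1.
have x_unit : x \is a GRing.unit by rewrite -(unitrX_pos _ N_gt0) xN1 unitr1.
by rewrite exprzDr // -exprnN xN1 invr1 mulr1.
Qed.

Lemma sum_nat_indicator (a b m : nat) (X : nat -> int) : (a <= m < b)%N ->
  \sum_(a <= j < b) ((nat_of_bool (j == m))%:Z * X j) = X m.
Proof.
move=> m_ab; rewrite (bigD1_seq m) ?mem_index_iota ?iota_uniq //=.
by rewrite eqxx mul1r big1 ?addr0 // => j /negbTE->; rewrite mul0r.
Qed.

Section DistinctEntries.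

Variables (F : finFieldType) (alpha : F) (n : nat) (c : 'rV[F]_n).
Hypothesis Vc_uniq : uniq (Vvec alpha c).

Lemma Vvec_uniq_inj :
  {in [pred i | 0 < i <= #|F|.-1]%N &, injective (fun i => wcount c (alpha ^+ i))}.
Proof.
move: Vc_uniq; rewrite /Vvec cat_uniq => /andP[+ _].
have -> : iota 1 #|F|.-1 = map (addn 1) (iota 0 #|F|.-1) by rewrite -iotaDl.
rewrite -map_comp => /mkseq_uniqP inj_c i l.
rewrite !inE => /andP[i_gt0 iN] /andP[l_gt0 lN] eq_il.
rewrite -(prednK i_gt0) -(prednK l_gt0); congr _.+1.
by apply: inj_c; rewrite /= ?add1n ?prednK // inE prednK.
Qed.

Lemma Vvec_uniq_neq0 (l : nat) : (0 < l <= #|F|.-1)%N ->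
  wcount c (alpha ^+ l) != wcount c 0.
Proof.
case/andP=> l_gt0 lN; move: Vc_uniq; rewrite /Vvec cat_uniq /= orbF => /and3P[_ + _].
apply: contraNneq => <-; apply: map_f.
by rewrite mem_iota l_gt0 add1n ltnS.
Qed.

End DistinctEntries.

Theorem mainTheorem8 (F : finFieldType) (alpha : F)
  (halpha : (#|F|.-1).-primitive_root alpha)
  (n k : nat) (C : {vspace 'rV[F]_n}) (hdim : \dim C = k)
  (hV : forall c : 'rV[F]_n, c \in C -> c != 0 -> uniq (Vvec alpha c)) :
  exists r : nat -> nat,
    (exists j : nat, (1 <= j <= #|F|.-1)%N /\ r j <> 0%N) /\
    forall c : 'rV[F]_n, c \in C -> c != 0 ->
      (forall i l : nat, (1 <= i)%N -> (i < l)%N -> (l <= #|F|.-1)%N ->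
         \sum_(1 <= j < #|F|) ((r j)%:Z *
            ((wcount c (alpha ^ (i%:Z - j%:Z)))%:Z
             - (wcount c (alpha ^ (l%:Z - j%:Z)))%:Z)) != 0 :> int)
      /\
      (forall l : nat, (1 <= l)%N -> (l <= #|F|.-1)%N ->
         \sum_(1 <= j < #|F|) ((r j)%:Z *
            ((wcount c (alpha ^ (l%:Z - j%:Z)))%:Z - (wcount c 0)%:Z)) != 0 :> int).
Proof.
have F_gt1 : (1 < #|F|)%N by apply: card_finNzRing_gt1.
have N_gt0 : (0 < #|F|.-1)%N by rewrite -ltnS prednK // ltnW.
have N_lt : (#|F|.-1 < #|F|)%N by rewrite prednK // ltnW.
have shift z : alpha ^ (z%:Z - (#|F|.-1)%:Z) = alpha ^+ z.
  exact: exprz_subn_order N_gt0 (prim_expr_order halpha).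
exists (fun j => nat_of_bool (j == #|F|.-1)); split.
  by exists #|F|.-1; rewrite N_gt0 leqnn eqxx.
move=> c cC c_neq0; have Vc_uniq := hV c cC c_neq0.
split=> [i l i_gt0 il lN | l l_gt0 lN]; rewrite sum_nat_indicator ?N_gt0 // !shift.
- have iN : (i <= #|F|.-1)%N := ltnW (leq_trans il lN).
  have l_gt0 : (0 < l)%N := leq_trans i_gt0 (ltnW il).
  rewrite subr_eq0 eqz_nat; apply: contraTneq il => /Vvec_uniq_inj-> //.
  - by rewrite ltnn.
  - by rewrite inE i_gt0.
  - by rewrite inE l_gt0.
- by rewrite subr_eq0 eqz_nat Vvec_uniq_neq0 // l_gt0.
Qed.
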